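(* Let $\gamma>0$ and $\delta\ge 0$ be given, and let $(S,L,H)$ be an open quantum system with $H=H_P+H_{un}$, where $H_{un}\in\mathcal W_1$. Let $w,z$ be real (i.e. componentwise self-adjoint) vectors of operators witnessing $H_{un}\in\mathcal W_1$: - for every $V\in\mathcal P$ they satisfy $[V,H_{un}]=[V,z^T]w-w^T[z,V]$; - they satisfy the sector bound $w^Tw\le \frac{1}{\gamma^2}z^Tz+\delta$. Let $W$ be a non-negative self-adjoint operator. Suppose there exist $V\in\mathcal P$ and a real constant $\lambda\ge 0$ such that $$-i[V,H_P]+\mathcal L(V)+[V,z^T][z,V]+\frac{1}{\gamma^2}z^Tz+W\le \lambda .$$ Then, for any initial state, $$\limsup_{T\to\infty}\frac1T\int_0^T\langle W(t)\rangle\,dt\le \lambda+\delta .$$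
   Context: **Canonical operators.** Let $n\ge1$. Let $q=(q_1,\dots,q_n)^T$ and $p=(p_1,\dots,p_n)^T$ be vectors of self-adjoint (position and momentum) operators on a Hilbert space, and write $x=(q^T,p^T)^T$. They satisfy the canonical commutation relations $[x,x^T]:=xx^T-(xx^T)^T=2i\theta=:\Sigma$, i.e. $[x_j,x_k]=2i\theta_{jk}$, where $\theta=\begin{pmatrix}0&I_n\\-I_n&0\end{pmatrix}$. **Commutator conventions.** $[A,B]=AB-BA$. For an operator $V$ and a column vector of operators $z$: - $[V,z^T]$ is the row vector with entries $[V,z_k]$; - $[z,V]$ is the column vector with entries $[z_k,V]$. For a vector of operators $L$, $L^\#$ denotes the componentwise adjoint and $L^\dagger=(L^\#)^T$. Operator inequalities $A\le B$ mean $B-A$ is positive semidefinite, and real constants are identified with multiples of the identity. **Open quantum system.** An open quantum system is specified by $(S,L,H)$, where $S$ is a scattering matrix, $L$ is a vector of coupling operators and $H$ is a self-adjoint Hamiltonian. Its generator is $$\mathcal G(\mathbf X)=-i[\mathbf X,H]+\mathcal L(\mathbf X),\qquad \mathcal L(\mathbf X)=\tfrac12L^\dagger[\mathbf X,L]+\tfrac12[L^\dagger,\mathbf X]L.$$ $W(t)$ denotes the Heisenberg evolution of an operator $W$ under this system, and $\langle\cdot\rangle$ denotes quantum expectation. **Known fact (may be used).** If $V,W$ are non-negative self-adjoint operators and $\lambda\in\mathbb R$ satisfy $\mathcal G(V)+W\le\lambda$, then for any initial state $\limsup_{T\to\infty}\frac1T\int_0^T\langle W(t)\rangle dt\le\lambda$.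 **The set $\mathcal P$.** $\mathcal P$ is the set of operators $V=x^TXx$ with $X\in\mathbb R^{2n\times 2n}$ symmetric positive definite. **The set $\mathcal W_1$.** Given $\gamma>0$ and $\delta\ge0$, $\mathcal W_1$ is the set of self-adjoint operators $H_{un}$ for which there exist real vectors of operators $w,z$ such that: - $[V,H_{un}]=[V,z^T]w-w^T[z,V]$ holds for all $V\in\mathcal P$; - $w^Tw\le \frac1{\gamma^2}z^Tz+\delta$. *)

From HB Require Import structures.
From mathcomp Require Import all_boot all_order all_algebra.
Set Implicit Arguments. Unset Strict Implicit. Unset Printing Implicit Defensive.
Import Order.TTheory GRing.Theory Num.Theory.
Local Open Scope ring_scope.

Section Ops.
Variables (C : numClosedFieldType) (A : algType C).

Definition comm (a b : A) : A := a * b - b * a.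

(* Axioms of a *-algebra over C with a positive cone [pos]
   (the cone of positive semidefinite operators). *)
Record star_alg (star : A -> A) (pos : A -> Prop) : Prop := StarAlg {
  star_add : forall a b, star (a + b) = star a + star b;
  star_scale : forall (c : C) a, star (c *: a) = c^* *: star a;
  star_mul : forall a b, star (a * b) = star b * star a;
  star_invol : forall a, star (star a) = a;
  pos_add : forall a b, pos a -> pos b -> pos (a + b);
  pos_scale : forall (c : C) a, 0 <= c -> pos a -> pos (c *: a);
  pos_sq : forall a, pos (star a * a)
}.

Definition opLe (pos : A -> Prop) (a b : A) : Prop := pos (b - a).

Definition nonneg_sa (star : A -> A) (pos : A -> Prop) (a : A) : Prop :=
  star a = a /\ pos a.

Definition real_vec (star : A -> A) (m : nat) (v : 'I_m -> A) : Prop :=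
  forall k, star (v k) = v k.

Definition theta (n : nat) : 'M[C]_(n + n) :=
  block_mx 0 1%:M (- 1%:M) 0.

Definition CCR (star : A -> A) (n : nat) (x : 'I_(n + n) -> A) : Prop :=
  (forall j, star (x j) = x j) /\
  (forall j k, comm (x j) (x k) = (2 * 'i * theta n j k) *: 1).

Definition real_spd (N : nat) (X : 'M[C]_N) : Prop :=
  (forall i j, X i j \is Num.real) /\ X^T = X /\
  (forall v : 'cV[C]_N, (forall i, v i 0 \is Num.real) -> v != 0 ->
     0 < (v^T *m X *m v) 0 0).

Definition inP (n : nat) (x : 'I_(n + n) -> A) (V : A) : Prop :=
  exists X : 'M[C]_(n + n), real_spd X /\
    V = \sum_(j < n + n) \sum_(k < n + n) X j k *: (x j * x k).

Definition lindblad (star : A -> A) (m : nat) (L : 'I_m -> A) (X : A) : A :=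
  2^-1 *: (\sum_(k < m) star (L k) * comm X (L k))
  + 2^-1 *: (\sum_(k < m) comm (star (L k)) X * L k).

Definition generator (star : A -> A) (m : nat) (L : 'I_m -> A) (H X : A) : A :=
  - 'i *: comm X H + lindblad star L X.

Definition limsup_le (f : C -> C) (c : C) : Prop :=
  forall eps : C, 0 < eps -> exists T0 : C, T0 \is Num.real /\
    forall T : C, T \is Num.real -> T0 <= T -> f T <= c + eps.

End Ops.

(* With u_k = [z_k, V] + i w_k, the commutator relation for H_un gives
   sum_k u_k^* u_k = [V, z^T][z, V] + i [V, H_un] + w^T w, so that
   -i [V, H_un] <= [V, z^T][z, V] + w^T w <= [V, z^T][z, V] + gamma^-2 z^T z + delta
   by the sector bound.  Added to the hypothesis this gives G(V) + W <= lam + delta,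
   and the averaging fact applies once V is a non-negative self-adjoint operator.
   The latter holds for V = x^T X x because an LDL^T decomposition of X (iterated
   Schur complements) writes V as a non-negative combination of squares of
   self-adjoint operators. *)

From mathcomp Require Import all_boot all_order all_algebra.
From mathcomp Require Import ring.
Import Order.TTheory GRing.Theory Num.Theory.
Local Open Scope ring_scope.
Set Implicit Arguments. Unset Strict Implicit.

Section RealQuadraticForms.
Variable F : numFieldType.

Definition qform N (X : 'I_N -> 'I_N -> F) (v : 'I_N -> F) : F :=
  \sum_(i < N) \sum_(j < N) v i * X i j * v j.

Definition real_posdef N (X : 'I_N -> 'I_N -> F) : Prop :=
  [/\ forall i j, X i j \is Num.real, forall i j, X i j = X j i &
      forall v, (forall i, v i \is Num.real) -> (exists i, v i != 0) ->
        0 < qform X v].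

Definition vcons N (t : F) (v : 'I_N -> F) (i : 'I_N.+1) : F :=
  if unlift ord0 i is Some k then v k else t.

Lemma vcons0 N t (v : 'I_N -> F) : vcons t v ord0 = t.
Proof. by rewrite /vcons unlift_none. Qed.

Lemma vconsS N t (v : 'I_N -> F) k : vcons t v (lift ord0 k) = v k.
Proof. by rewrite /vcons liftK. Qed.

Lemma vcons_real N t (v : 'I_N -> F) :
  t \is Num.real -> (forall k, v k \is Num.real) ->
  forall i, vcons t v i \is Num.real.
Proof. by move=> ht hv i; rewrite /vcons; case: unlift. Qed.

Definition schur N (X : 'I_N.+1 -> 'I_N.+1 -> F) (i j : 'I_N) : F :=
  X (lift ord0 i) (lift ord0 j)
  - X ord0 (lift ord0 i) * X ord0 (lift ord0 j) / X ord0 ord0.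

Lemma qform_vcons N (X : 'I_N.+1 -> 'I_N.+1 -> F) t v :
  qform X (vcons t v) = t * X ord0 ord0 * t
    + \sum_(k < N) t * X ord0 (lift ord0 k) * v k
    + \sum_(j < N) (v j * X (lift ord0 j) ord0 * t
       + \sum_(k < N) v j * X (lift ord0 j) (lift ord0 k) * v k).
Proof.
rewrite /qform big_ord_recl big_ord_recl vcons0; congr (_ + _ + _).
  by apply: eq_bigr => k _; rewrite vconsS.
apply: eq_bigr => j _; rewrite big_ord_recl !vconsS vcons0; congr (_ + _).
by apply: eq_bigr => k _; rewrite !vconsS.
Qed.

(* Minimising over the first coordinate: the optimal choice [t = - s / a]
   leaves exactly the Schur complement of the pivot [a]. *)
Lemma qform_vcons_schur N (X : 'I_N.+1 -> 'I_N.+1 -> F) v :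
  (forall i j, X i j = X j i) -> X ord0 ord0 != 0 ->
  let s := \sum_(k < N) X ord0 (lift ord0 k) * v k in
  qform X (vcons (- s / X ord0 ord0) v) = qform (schur X) v.
Proof.
move=> Xsym a0 s; set a := X ord0 ord0; set t := - s / a.
pose D (j k : 'I_N) := v j * X (lift ord0 j) (lift ord0 k) * v k.
have lin : \sum_(k < N) t * X ord0 (lift ord0 k) * v k = t * s.
  by rewrite /s mulr_sumr; apply: eq_bigr => k _; rewrite mulrA.
have col : \sum_(j < N) (v j * X (lift ord0 j) ord0 * t + \sum_(k < N) D j k)
    = s * t + \sum_(j < N) \sum_(k < N) D j k.
  rewrite big_split /=; congr (_ + _).
  by rewrite /s mulr_suml; apply: eq_bigr => j _; rewrite Xsym; ring.
have sq : qform (schur X) v = \sum_(j < N) \sum_(k < N) D j k - s * s / a.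
  have -> : s * s / a = \sum_(j < N) \sum_(k < N)
      v j * (X ord0 (lift ord0 j) * X ord0 (lift ord0 k) / a) * v k.
    rewrite /s mulr_suml mulr_suml; apply: eq_bigr => j _.
    by rewrite mulr_sumr mulr_suml; apply: eq_bigr => k _; ring.
  rewrite /qform -sumrB; apply: eq_bigr => j _; rewrite -sumrB.
  by apply: eq_bigr => k _; rewrite /schur mulrBr mulrBl.
by rewrite qform_vcons lin col sq /t /a; field.
Qed.

Lemma real_posdef_pivot N (X : 'I_N.+1 -> 'I_N.+1 -> F) :
  real_posdef X -> 0 < X ord0 ord0.
Proof.
case=> _ _ Xpos; have := Xpos (vcons 1 (fun _ => 0)).
rewrite qform_vcons big1 => [|k _]; last by rewrite mulr0.
rewrite big1 => [|j _]; last by rewrite !mul0r add0r big1 // => k _; rewrite !mul0r.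
rewrite !addr0 mulr1 mul1r; apply; first exact: vcons_real.
by exists ord0; rewrite vcons0 oner_eq0.
Qed.

Lemma real_posdef_schur N (X : 'I_N.+1 -> 'I_N.+1 -> F) :
  real_posdef X -> real_posdef (schur X).
Proof.
move=> hX; have a_gt0 := real_posdef_pivot hX.
case: hX => Xreal Xsym Xpos; split.
- by move=> i j; rewrite /schur rpredB ?rpredM ?rpredV ?Xreal.
- by move=> i j; rewrite /schur Xsym (mulrC (X ord0 (lift ord0 i))).
move=> v vreal [i vi]; rewrite -qform_vcons_schur ?gt_eqF //.
apply: Xpos; last by exists (lift ord0 i); rewrite vconsS.
apply: vcons_real => //.
by rewrite rpredM ?rpredN ?rpredV ?Xreal ?rpred_sum // => k _; rewrite rpredM.
Qed.

End RealQuadraticForms.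

Section StarAlgebra.
Variables (C : numClosedFieldType) (A : algType C).
Variables (star : A -> A) (pos : A -> Prop).
Hypothesis hA : star_alg star pos.

Lemma star0 : star 0 = 0.
Proof.
have h := star_add hA 0 0; rewrite addr0 in h.
by apply: (addrI (star 0)); rewrite -h addr0.
Qed.

Lemma starN a : star (- a) = - star a.
Proof. by rewrite -scaleN1r (star_scale hA) rmorphN1 scaleN1r. Qed.

Lemma starB a b : star (a - b) = star a - star b.
Proof. by rewrite (star_add hA) starN. Qed.

Lemma star_sum N (F : 'I_N -> A) :
  star (\sum_(i < N) F i) = \sum_(i < N) star (F i).
Proof. exact: (big_morph star (star_add hA) star0). Qed.

Lemma star_comm a b : star (comm a b) = comm (star b) (star a).
Proof. by rewrite /comm starB !(star_mul hA). Qed.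

Lemma comm_addr (a b c : A) : comm a (b + c) = comm a b + comm a c.
Proof. by rewrite /comm mulrDr mulrDl opprD addrACA. Qed.

Lemma pos0 : pos 0.
Proof. by have := pos_sq hA 0; rewrite mulr0. Qed.

Lemma pos_sum N (F : 'I_N -> A) :
  (forall i, pos (F i)) -> pos (\sum_(i < N) F i).
Proof. by move=> h; apply: (big_ind pos pos0 (pos_add hA)) => i _. Qed.

Lemma opLe_refl a : opLe pos a a.
Proof. by rewrite /opLe subrr; exact: pos0. Qed.

Lemma opLe_trans a b c : opLe pos a b -> opLe pos b c -> opLe pos a c.
Proof. by move=> hab hbc; rewrite /opLe -(subrK b c) -addrA; exact: (pos_add hA). Qed.

Lemma opLe_add2l a b c : opLe pos b c -> opLe pos (a + b) (a + c).
Proof. by rewrite /opLe opprD addrACA subrr add0r. Qed.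

Lemma opLe_add2r a b c : opLe pos b c -> opLe pos (b + a) (c + a).
Proof. by rewrite ![_ + a]addrC; exact: opLe_add2l. Qed.

Definition opform N (X : 'I_N -> 'I_N -> C) (y : 'I_N -> A) : A :=
  \sum_(j < N) \sum_(k < N) X j k *: (y j * y k).

Lemma opform_recl N (X : 'I_N.+1 -> 'I_N.+1 -> C) y :
  opform X y = X ord0 ord0 *: (y ord0 * y ord0)
    + \sum_(k < N) X ord0 (lift ord0 k) *: (y ord0 * y (lift ord0 k))
    + \sum_(j < N) (X (lift ord0 j) ord0 *: (y (lift ord0 j) * y ord0)
       + \sum_(k < N) X (lift ord0 j) (lift ord0 k) *: (y (lift ord0 j) * y (lift ord0 k))).
Proof.
rewrite /opform big_ord_recl big_ord_recl; congr (_ + _ + _).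
by apply: eq_bigr => j _; rewrite big_ord_recl.
Qed.

(* One step of the LDL^T decomposition, in the operator variables. *)
Lemma opform_schur N (X : 'I_N.+1 -> 'I_N.+1 -> C) y :
  (forall i j, X i j = X j i) -> X ord0 ord0 != 0 ->
  let u := y ord0 + \sum_(k < N) (X ord0 (lift ord0 k) / X ord0 ord0) *: y (lift ord0 k) in
  opform X y = X ord0 ord0 *: (u * u) + opform (schur X) (y \o lift ord0).
Proof.
move=> Xsym a0 u; pose a := X ord0 ord0; pose b k := X ord0 (lift ord0 k).
pose y' k := y (lift ord0 k).
have cross_l : a *: (y ord0 * \sum_(k < N) (b k / a) *: y' k)
    = \sum_(k < N) b k *: (y ord0 * y' k).
  rewrite mulr_sumr scaler_sumr; apply: eq_bigr => k _.
  by rewrite -scalerAr scalerA; congr (_ *: _); field.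
have cross_r : a *: ((\sum_(k < N) (b k / a) *: y' k) * y ord0)
    = \sum_(k < N) b k *: (y' k * y ord0).
  rewrite mulr_suml scaler_sumr; apply: eq_bigr => k _.
  by rewrite -scalerAl scalerA; congr (_ *: _); field.
have tail : a *: ((\sum_(j < N) (b j / a) *: y' j) * \sum_(k < N) (b k / a) *: y' k)
    = \sum_(j < N) \sum_(k < N) (b j * b k / a) *: (y' j * y' k).
  rewrite mulr_suml scaler_sumr; apply: eq_bigr => j _.
  rewrite mulr_sumr scaler_sumr; apply: eq_bigr => k _.
  by rewrite -scalerAl -scalerAr !scalerA; congr (_ *: _); field.
have schur_tail : opform (schur X) y'
    = \sum_(j < N) \sum_(k < N) X (lift ord0 j) (lift ord0 k) *: (y' j * y' k)
      - \sum_(j < N) \sum_(k < N) (b j * b k / a) *: (y' j * y' k).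
  rewrite /opform -sumrB; apply: eq_bigr => j _; rewrite -sumrB.
  by apply: eq_bigr => k _; rewrite /schur scalerBl.
rewrite /u mulrDl !mulrDr !scalerDr -/a -/y' cross_l cross_r tail.
rewrite [opform (schur X) _]schur_tail opform_recl big_split /=.
under [\sum_(j < N) X (lift ord0 j) ord0 *: _]eq_bigr do rewrite Xsym.
by rewrite -!addrA (addrC (\sum_(j < N) \sum_(k < N) _)) subrK.
Qed.

Lemma opform_pos N (X : 'I_N -> 'I_N -> C) (y : 'I_N -> A) :
  (forall j, star (y j) = y j) -> real_posdef X -> pos (opform X y).
Proof.
elim: N X y => [|N IH] X y ysa hX; first by rewrite /opform big_ord0; exact: pos0.
have a_gt0 := real_posdef_pivot hX.
have [Xreal Xsym _] := hX.
rewrite opform_schur ?gt_eqF //; apply: (pos_add hA).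
  apply: (pos_scale hA (ltW a_gt0)).
  set u := _ + _; have u_sa : star u = u.
    rewrite (star_add hA) ysa star_sum; congr (_ + _); apply: eq_bigr => k _.
    by rewrite (star_scale hA) ysa conj_Creal // rpredM ?rpredV ?Xreal.
  by rewrite -{1}u_sa; exact: (pos_sq hA).
by apply: IH; [move=> j; apply: ysa | apply: real_posdef_schur].
Qed.

End StarAlgebra.

Lemma real_spd_posdef (C : numClosedFieldType) N (X : 'M[C]_N) :
  real_spd X -> real_posdef (fun i j => X i j).
Proof.
case=> Xreal [Xt Xpos]; split=> // [i j|v vreal [i vi]]; first by rewrite -[in LHS]Xt mxE.
have -> : qform (fun i j => X i j) v = ((\col_i v i)^T *m X *m \col_i v i) 0 0.
  rewrite mxE /qform exchange_big; apply: eq_bigr => j _.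
  by rewrite mxE mulr_suml; apply: eq_bigr => k _; rewrite !mxE.
apply: Xpos => [k|]; first by rewrite mxE.
by apply: contra vi => /eqP/matrixP/(_ i 0); rewrite !mxE => ->.
Qed.

Section OpenSystem.
Variables (C : numClosedFieldType) (A : algType C).
Variables (star : A -> A) (pos : A -> Prop).
Hypothesis hA : star_alg star pos.

Lemma inP_nonneg_sa n (x : 'I_(n + n) -> A) V :
  (forall j, star (x j) = x j) -> inP x V -> nonneg_sa star pos V.
Proof.
move=> xsa [X [/real_spd_posdef hX ->]]; split; last exact: (opform_pos hA).
have [Xreal Xsym _] := hX.
rewrite (star_sum hA) exchange_big /=; apply: eq_bigr => j _.
rewrite (star_sum hA); apply: eq_bigr => k _.
by rewrite (star_scale hA) (star_mul hA) !xsa conj_Creal ?Xreal // Xsym.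
Qed.

Lemma sum_sq_comm_addi p (V : A) (w z : 'I_p -> A) :
  star V = V -> real_vec star w -> real_vec star z ->
  \sum_(k < p) star (comm (z k) V + 'i *: w k) * (comm (z k) V + 'i *: w k)
  = \sum_(k < p) comm V (z k) * comm (z k) V
    + 'i *: (\sum_(k < p) comm V (z k) * w k - \sum_(k < p) w k * comm (z k) V)
    + \sum_(k < p) w k * w k.
Proof.
move=> Vsa wsa zsa.
rewrite scalerBr !scaler_sumr -sumrB -!big_split; apply: eq_bigr => k _ /=.
rewrite (star_add hA) (star_scale hA) conjCi wsa (star_comm hA) Vsa zsa.
move: (comm V (z k)) (comm (z k) V) => c c'.
rewrite mulrDl !mulrDr -!scalerAr -!scalerAl !scalerA mulrN -expr2 sqrCi opprK.
by rewrite scale1r scaleNr !addrA.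
Qed.

Lemma i_comm_le_sector p (V Hun : A) (w z : 'I_p -> A) (bound : A) :
  star V = V -> real_vec star w -> real_vec star z ->
  comm V Hun = \sum_(k < p) comm V (z k) * w k - \sum_(k < p) w k * comm (z k) V ->
  opLe pos (\sum_(k < p) w k * w k) bound ->
  opLe pos (- 'i *: comm V Hun) (\sum_(k < p) comm V (z k) * comm (z k) V + bound).
Proof.
move=> Vsa wsa zsa HunE wwle; apply: (opLe_trans hA) (opLe_add2l _ wwle).
rewrite /opLe scaleNr opprK addrAC HunE -(sum_sq_comm_addi Vsa wsa zsa).
by apply: (pos_sum hA) => k; exact: (pos_sq hA).
Qed.

End OpenSystem.

Theorem lemma2
  (C : numClosedFieldType) (A : algType C)
  (star : A -> A) (pos : A -> Prop) (hA : star_alg star pos)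
  (n : nat) (hn : (1 <= n)%N) (x : 'I_(n + n) -> A) (hx : CCR star x)
  (m : nat) (L : 'I_m -> A)
  (HP Hun : A) (hHP : star HP = HP) (hHun : star Hun = Hun)
  (state : Type) (avg : state -> A -> C -> C)
  (hKnown : forall (V' W' : A) (lam' : C),
      lam' \is Num.real ->
      nonneg_sa star pos V' -> nonneg_sa star pos W' ->
      opLe pos (generator star L (HP + Hun) V' + W') (lam'%:A) ->
      forall rho : state, limsup_le (avg rho W') lam')
  (gamma delta : C) (hgamma : 0 < gamma) (hdelta : 0 <= delta)
  (p : nat) (w z : 'I_p -> A) (hw : real_vec star w) (hz : real_vec star z)
  (hcomm : forall V : A, inP x V ->
      comm V Hun = \sum_(k < p) comm V (z k) * w k
                   - \sum_(k < p) w k * comm (z k) V)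
  (hsector : opLe pos (\sum_(k < p) w k * w k)
                 (gamma^-2 *: (\sum_(k < p) z k * z k) + delta%:A))
  (W : A) (hW : nonneg_sa star pos W)
  (V : A) (hV : inP x V) (lam : C) (hlam : 0 <= lam)
  (hineq : opLe pos
      (- 'i *: comm V HP + lindblad star L V
       + \sum_(k < p) comm V (z k) * comm (z k) V
       + gamma^-2 *: (\sum_(k < p) z k * z k) + W)
      (lam%:A)) :
  forall rho : state, limsup_le (avg rho W) (lam + delta).
Proof.
have V_nn : nonneg_sa star pos V := inP_nonneg_sa hA hx.1 hV.
have Hun_le := i_comm_le_sector hA V_nn.1 hw hz (hcomm V hV) hsector.
apply: (hKnown V) => //; first by rewrite rpredD ?ger0_real.
rewrite /generator comm_addr scalerDr -addrA addrAC scalerDl.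
apply: (opLe_trans hA (opLe_add2l _ Hun_le)).
apply: (opLe_trans hA) (opLe_add2r _ hineq).
(* [lindblad] unfolds to a sum, so hide it before reassociating. *)
move: (lindblad _ _ _) => Lin.
by rewrite -!addrA !(addrCA W); exact: (opLe_refl hA).
Qed.
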